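(* Consider the algorithm described in the context. Suppose: (i) $\|\hat H_k\|\leq\kappa_H$ for all $k$, some $\kappa_H\geq1$; (ii) $f$ is bounded below by $f_{\mathrm{low}}$, twice continuously differentiable with $L_H$-Lipschitz Hessian, and $\|\nabla^2 f(\mathbf{x}_k)\|\leq M$ for all $k$; (iii) every step satisfies $\hat{m}_k(\mathbf{0}) - \hat{m}_k(\hat{\mathbf{s}}_k) \geq \kappa_s \max\left(\|\hat{\mathbf{g}}_k\| \min\left(\Delta_k, \frac{\|\hat{\mathbf{g}}_k\|}{\max(\|\hat{H}_k\|,1)}\right), \hat{\tau}^m_k\Delta_k^2\right)$ for some $\kappa_s>0$. Let $\epsilon>0$ with $\theta := (1-\alpha)^2 - \frac{4M(r-1)\alpha^2}{\epsilon(1-\alpha)^2}>0$, and let $K\geq0$. If $\sigma_k\geq\epsilon$ for all $k\leq K$, then $$\#(\mathcal{D}(\gamma_{\mathrm{dec}}^{-1}\Delta)\cap\mathcal{U})\leq c_3\cdot\#(\mathcal{D}(\gamma_{\mathrm{inc}}^{-1}\Delta)\cap\mathcal{S})+c_4(\Delta)\quad\text{for all }\Delta\leq\Delta_0,$$ and $$\#(\mathcal{D}^C(\gamma_{\mathrm{inc}}^{-1}\Delta)\cap\mathcal{S})\leq c_3^{-1}\cdot\#(\mathcal{D}^C(\gamma_{\mathrm{dec}}^{-1}\Delta)\cap\mathcal{U})\quad\text{for all }\Delta\leq\min(\Delta_0,\gamma_{\mathrm{inc}}^{-1}\Delta_{\max}),$$ where $c_3:=\frac{\log(\gamma_{\mathrm{inc}})}{\log(\gamma_{\mathrm{dec}}^{-1})}$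 and $c_4(\Delta):=\frac{\log(\Delta_0/\Delta)}{\log(\gamma_{\mathrm{dec}}^{-1})}$.
   Context: Algorithm: Let $f:\mathbb{R}^n\to\mathbb{R}$. Fix $\mathbf{x}_0$, $p\in\{1,\ldots,n\}$, $0<\Delta_0\leq\Delta_{\max}$, $0<\gamma_{\mathrm{dec}}<1<\gamma_{\mathrm{inc}}$, $\eta\in(0,1)$, $\mu>0$. For $k=0,1,\ldots$: select a random $P_k\in\mathbb{R}^{n\times p}$; build $\hat m_k(\hat{\mathbf{s}})=f(\mathbf{x}_k)+\hat{\mathbf{g}}_k^T\hat{\mathbf{s}}+\frac12\hat{\mathbf{s}}^T\hat H_k\hat{\mathbf{s}}$ ($\hat H_k$ symmetric) which is $P_k$-fully quadratic: constants $\kappa_{\mathrm{ef}},\kappa_{\mathrm{eg}},\kappa_{\mathrm{eh}}>0$ independent of $k$ with $|f(\mathbf{x}_k+P_k\hat{\mathbf{s}})-\hat m_k(\hat{\mathbf{s}})|\leq\kappa_{\mathrm{ef}}\Delta_k^3$, $\|P_k^T\nabla f(\mathbf{x}_k+P_k\hat{\mathbf{s}})-\nabla\hat m_k(\hat{\mathbf{s}})\|\leq\kappa_{\mathrm{eg}}\Delta_k^2$, $\|P_k^T\nabla^2 f(\mathbf{x}_k+P_k\hat{\mathbf{s}})P_k-\hat H_k\|\leq\kappa_{\mathrm{eh}}\Delta_k$ for all $\|\hat{\mathbf{s}}\|\leq\Delta_k$; compute a step $\hat{\mathbf{s}}_k$ with $\|\hat{\mathbf{s}}_k\|\leq\Delta_k$;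 let $R_k:=\frac{f(\mathbf{x}_k)-f(\mathbf{x}_k+P_k\hat{\mathbf{s}}_k)}{\hat m_k(\mathbf{0})-\hat m_k(\hat{\mathbf{s}}_k)}$, $\hat\tau^m_k:=\max(-\lambda_{\min}(\hat H_k),0)$, $\hat\sigma^m_k:=\max(\|\hat{\mathbf{g}}_k\|,\hat\tau^m_k)$; if $R_k\geq\eta$ and $\hat\sigma^m_k\geq\mu\Delta_k$ the iteration is successful: $\mathbf{x}_{k+1}=\mathbf{x}_k+P_k\hat{\mathbf{s}}_k$, $\Delta_{k+1}=\min(\gamma_{\mathrm{inc}}\Delta_k,\Delta_{\max})$; otherwise unsuccessful: $\mathbf{x}_{k+1}=\mathbf{x}_k$, $\Delta_{k+1}=\gamma_{\mathrm{dec}}\Delta_k$. Criticality: $\sigma_k:=\max(\|\nabla f(\mathbf{x}_k)\|,\max(-\lambda_{\min}(\nabla^2 f(\mathbf{x}_k)),0))$. $\alpha\in(0,1)$ is the well-alignment parameter (a matrix $P_k$ is well-aligned if $\|P_k\|\leq P_{\max}$, $\|P_k^T\nabla f(\mathbf{x}_k)\|\geq(1-\alpha)\|\nabla f(\mathbf{x}_k)\|$, $\|\hat{\mathbf{v}}_r\|\geq1-\alpha$, $(\hat{\mathbf{v}}_i^T\hat{\mathbf{v}}_r)^2\leq4\alpha^2$ for $i<r$, where $\nabla^2 f(\mathbf{x}_k)=\sum_{i=1}^r\lambda_i\mathbf{v}_i\mathbf{v}_i^T$ with $\lambda_1\geq\cdots\geq\lambda_r$, $r=\operatorname{rank}(\nabla^2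 f(\mathbf{x}_k))$, orthonormal $\mathbf{v}_i$, and $\hat{\mathbf{v}}_i=P_k^T\mathbf{v}_i$); $r$ in $\theta$ is this rank. Index sets, for fixed $K$: $\mathcal{S}$ (resp. $\mathcal{U}$) = successful (resp. unsuccessful) iterations in $\{0,\ldots,K\}$; $\mathcal{D}(\Delta)$ (resp. $\mathcal{D}^C(\Delta)$) = iterations in $\{0,\ldots,K\}$ with $\Delta_k\geq\Delta$ (resp. $\Delta_k<\Delta$); $\#$ denotes cardinality. *)

From HB Require Import structures.
From mathcomp Require Import all_boot all_order all_algebra.
From mathcomp Require Import all_classical all_reals all_analysis.
Set Implicit Arguments. Unset Strict Implicit. Unset Printing Implicit Defensive.
Import Order.TTheory GRing.Theory Num.Theory.
Import numFieldNormedType.Exports.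
Local Open Scope classical_set_scope.
Local Open Scope ring_scope.

Section Defs.
Variable R : realType.

Definition enorm m (v : 'cV[R]_m) : R := Num.sqrt (\sum_i (v i 0) ^+ 2).

Definition opnorm m n (A : 'M[R]_(m, n)) : R :=
  sup [set enorm (A *m v) | v in [set v : 'cV[R]_n | enorm v <= 1]].

Definition lambda_min n (A : 'M[R]_n) : R := inf [set a : R | eigenvalue A a].

Definition evec n (i : 'I_n) : 'cV[R]_n := delta_mx i 0.

Definition partial n (i : 'I_n) (f : 'cV[R]_n -> R) : 'cV[R]_n -> R :=
  fun x => derive f x (evec i).
Definition grad n (f : 'cV[R]_n -> R) (x : 'cV[R]_n) : 'cV[R]_n :=
  \col_i partial i f x.
Definition hess n (f : 'cV[R]_n -> R) (x : 'cV[R]_n) : 'M[R]_n :=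
  \matrix_(i, j) partial i (partial j f) x.

Definition twice_cont_diff n (f : 'cV[R]_n -> R) : Prop :=
  (forall x, differentiable f x) /\
  (forall (j : 'I_n) x, differentiable (partial j f) x) /\
  (forall (i j : 'I_n), continuous (partial i (partial j f))).

Definition hess_lipschitz n (f : 'cV[R]_n -> R) (L : R) : Prop :=
  forall x y, opnorm (hess f x - hess f y) <= L * enorm (x - y).

Definition crit n (f : 'cV[R]_n -> R) (x : 'cV[R]_n) : R :=
  Num.max (enorm (grad f x)) (Num.max (- lambda_min (hess f x)) 0).

Definition qmodel p (fx : R) (g : 'cV[R]_p) (H : 'M[R]_p) (s : 'cV[R]_p) : R :=
  fx + (g^T *m s) 0 0 + 2^-1 * (s^T *m H *m s) 0 0.

Definition tau_m p (H : 'M[R]_p) : R := Num.max (- lambda_min H) 0.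
Definition sigma_m p (g : 'cV[R]_p) (H : 'M[R]_p) : R :=
  Num.max (enorm g) (tau_m H).

Definition ratio n p (f : 'cV[R]_n -> R) (x : 'cV[R]_n) (P : 'M[R]_(n, p))
  (g : 'cV[R]_p) (H : 'M[R]_p) (s : 'cV[R]_p) : R :=
  (f x - f (x + P *m s)) / (qmodel (f x) g H 0 - qmodel (f x) g H s).

Definition successful n p (f : 'cV[R]_n -> R) (eta mu : R) (x : 'cV[R]_n)
  (P : 'M[R]_(n, p)) (g : 'cV[R]_p) (H : 'M[R]_p) (s : 'cV[R]_p) (Delta : R)
  : bool :=
  (eta <= ratio f x P g H s) && (mu * Delta <= sigma_m g H).

End Defs.

(** Above a threshold [D], the
    quantity [max(Delta_k, D)] is multiplied by at most [ginc] at the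
    successful iterations with [Delta_k >= D / ginc], by [gdec] at the
    unsuccessful ones with [Delta_k >= D / gdec], and does not increase
    otherwise; as it starts at [Delta0] and never drops below [D], we get
    [D <= Delta0 ginc^s gdec^u], and taking logarithms gives the first bound.
    Dually, [min(Delta_k, D)] is multiplied by at least [ginc] resp. [gdec] at
    the iterations below the thresholds (the cap [Deltamax >= D] does not
    interfere); it starts at [D] and never exceeds [D], whence
    [ginc^s gdec^u <= 1]. *)
From HB Require Import structures.
From mathcomp Require Import all_boot all_order all_algebra.
From mathcomp Require Import all_classical all_reals all_analysis.
From mathcomp Require Import lra.
Set Implicit Arguments. Unset Strict Implicit. Unset Printing Implicit Defensive.
Import Order.TTheory GRing.Theory Num.Theory.
Import numFieldNormedType.Exports.
Local Open Scope classical_set_scope.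
Local Open Scope ring_scope.

Lemma ler_prod_telescope (R : numDomainType) (u a : nat -> R) :
  (forall k, 0 <= a k) -> (forall k, u k.+1 <= u k * a k) ->
  forall N, u N <= u 0%N * \prod_(0 <= k < N) a k.
Proof.
move=> a_ge0 step; elim=> [|N IH]; first by rewrite big_geq ?mulr1.
rewrite big_nat_recr //= mulrA.
exact: le_trans (step N) (ler_wpM2r (a_ge0 N) IH).
Qed.

Lemma ger_prod_telescope (R : numDomainType) (u a : nat -> R) :
  (forall k, 0 <= a k) -> (forall k, u k * a k <= u k.+1) ->
  forall N, u 0%N * \prod_(0 <= k < N) a k <= u N.
Proof.
move=> a_ge0 step; elim=> [|N IH]; first by rewrite big_geq ?mulr1.
rewrite big_nat_recr //= mulrA.
exact: le_trans (ler_wpM2r (a_ge0 N) IH) (step N).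
Qed.

Lemma prod_exprb_card (R : pzSemiRingType) (c : R) N (P : nat -> bool) :
  \prod_(0 <= k < N) c ^+ P k = c ^+ #|[set k : 'I_N | P k]|.
Proof.
rewrite big_mkord prodrXr -sum1_card; congr (c ^+ _).
rewrite [RHS]big_mkcond; apply: eq_bigr => k _.
by rewrite unfold_in asboolb; case: (P k).
Qed.

Lemma max_scale_le (R : realFieldType) (c d D : R) : 0 < c ->
  Num.max (c * d) D <= Num.max d D * c ^+ (c^-1 * D <= d)%R.
Proof.
move=> c_gt0; rewrite ler_pdivrMl //; case: (leP D (c * d)) => [D_le | lt_D] /=.
- by rewrite expr1 [c * d]mulrC ler_pM2r // le_max lexx.
- by rewrite expr0 mulr1 le_max lexx orbT.
Qed.

Lemma min_scale_ge (R : realFieldType) (c d D : R) : 0 < c ->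
  Num.min d D * c ^+ (d < c^-1 * D)%R <= Num.min (c * d) D.
Proof.
move=> c_gt0; rewrite ltr_pdivlMl //; case: (ltP (c * d) D) => [lt_D | D_le] /=.
- by rewrite expr1 [c * d]mulrC ler_pM2r // ge_min lexx.
- by rewrite expr0 mulr1 ge_min lexx orbT.
Qed.

Section RadiusDynamics.
Variables (R : realFieldType) (Delta : nat -> R) (succ : nat -> bool).
Variables (Deltamax gdec ginc : R).
Hypotheses (gdec_gt0 : 0 < gdec) (ginc_gt0 : 0 < ginc).
Hypothesis Delta_succ :
  forall k, succ k -> Delta k.+1 = Num.min (ginc * Delta k) Deltamax.
Hypothesis Delta_unsucc : forall k, ~~ succ k -> Delta k.+1 = gdec * Delta k.

Definition succ_above D k := (ginc^-1 * D <= Delta k)%R && succ k.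
Definition unsucc_above D k := (gdec^-1 * D <= Delta k)%R && ~~ succ k.
Definition succ_below D k := (Delta k < ginc^-1 * D)%R && succ k.
Definition unsucc_below D k := (Delta k < gdec^-1 * D)%R && ~~ succ k.

Lemma max_radius_step D k :
  Num.max (Delta k.+1) D <=
  Num.max (Delta k) D * (ginc ^+ succ_above D k * gdec ^+ unsucc_above D k).
Proof.
rewrite /succ_above /unsucc_above.
case: (boolP (succ k)) => sk; rewrite ?andbT ?andbF expr0 ?mulr1 ?mul1r.
- apply: le_trans (max_scale_le _ _ ginc_gt0).
  by rewrite Delta_succ // ge_max !le_max ge_min !lexx ?orbT.
- by rewrite Delta_unsucc // max_scale_le.
Qed.

Lemma min_radius_step D k : D <= Deltamax ->
  Num.min (Delta k) D * (ginc ^+ succ_below D k * gdec ^+ unsucc_below D k)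
  <= Num.min (Delta k.+1) D.
Proof.
rewrite /succ_below /unsucc_below => D_le.
case: (boolP (succ k)) => sk; rewrite ?andbT ?andbF expr0 ?mulr1 ?mul1r.
- by rewrite Delta_succ // -minA (min_idPr D_le) min_scale_ge.
- by rewrite Delta_unsucc // min_scale_ge.
Qed.

Lemma max_radius_bound D N :
  Num.max (Delta N) D <=
  Num.max (Delta 0%N) D * ginc ^+ #|[set k : 'I_N | succ_above D k]|
                        * gdec ^+ #|[set k : 'I_N | unsucc_above D k]|.
Proof.
rewrite -(prod_exprb_card _ _ (succ_above D)).
rewrite -(prod_exprb_card _ _ (unsucc_above D)) -mulrA -big_split /=.
apply: (@ler_prod_telescope _ (fun j => Num.max (Delta j) D)) => k.
  by rewrite mulr_ge0 // exprn_ge0 // ltW.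
exact: max_radius_step.
Qed.

Lemma min_radius_bound D N : D <= Deltamax ->
  Num.min (Delta 0%N) D * ginc ^+ #|[set k : 'I_N | succ_below D k]|
                        * gdec ^+ #|[set k : 'I_N | unsucc_below D k]|
  <= Num.min (Delta N) D.
Proof.
move=> D_le.
rewrite -(prod_exprb_card _ _ (succ_below D)).
rewrite -(prod_exprb_card _ _ (unsucc_below D)) -mulrA -big_split /=.
apply: (@ger_prod_telescope _ (fun j => Num.min (Delta j) D)) => k.
  by rewrite mulr_ge0 // exprn_ge0 // ltW.
exact: min_radius_step.
Qed.

End RadiusDynamics.

Section LogCounting.
Variables (R : realType) (gi gd : R).
Hypotheses (gi_gt1 : 1 < gi) (gd_gt0 : 0 < gd) (gd_lt1 : gd < 1).

Let gi_gt0 : 0 < gi. Proof. exact: lt_trans ltr01 gi_gt1. Qed.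
Let ln_gdV_gt0 : 0 < ln gd^-1. Proof. by rewrite ln_gt0 // invf_gt1. Qed.
Let ln_gd : ln gd = - ln gd^-1. Proof. by rewrite lnV ?opprK // posrE. Qed.

Lemma count_le_of_ler_expr (D D0 : R) (s u : nat) : 0 < D ->
  D <= D0 * gi ^+ s * gd ^+ u ->
  u%:R <= ln gi / ln gd^-1 * s%:R + ln (D0 / D) / ln gd^-1.
Proof.
move=> D_gt0 D_le.
have gis : 0 < gi ^+ s by rewrite exprn_gt0.
have gdu : 0 < gd ^+ u by rewrite exprn_gt0.
have D0_gt0 : 0 < D0.
  by rewrite -(pmulr_lgt0 _ (mulr_gt0 gis gdu)) mulrA (lt_le_trans D_gt0 D_le).
have : ln D <= ln D0 + ln gi *+ s + ln gd *+ u.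
  rewrite -(lnXn s gi_gt0) -(lnXn u gd_gt0) -!lnM ?posrE ?mulr_gt0 //.
  by rewrite ler_ln // posrE !mulr_gt0.
rewrite ln_div ?posrE // mulrAC -mulrDl ler_pdivlMr // ln_gd.
rewrite -[_ *+ s]mulr_natr -[_ *+ u]mulr_natr.
lra.
Qed.

Lemma count_le_of_expr_le1 (s u : nat) : gi ^+ s * gd ^+ u <= 1 ->
  s%:R <= (ln gi / ln gd^-1)^-1 * u%:R.
Proof.
move=> pow_le1.
have : ln gi *+ s + ln gd *+ u <= 0.
  by rewrite -(lnXn s gi_gt0) -(lnXn u gd_gt0) -lnM ?posrE ?exprn_gt0 // ln_le0.
have ln_gi_gt0 : 0 < ln gi by rewrite ln_gt0.
rewrite invf_div mulrAC ler_pdivlMr // ln_gd.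
rewrite -[_ *+ s]mulr_natr -[_ *+ u]mulr_natr.
lra.
Qed.

End LogCounting.

Theorem lemma3p12 (R : realType) (n p : nat) (f : 'cV[R]_n -> R)
  (x0 : 'cV[R]_n) (Delta0 Deltamax gdec ginc eta mu : R)
  (x : nat -> 'cV[R]_n) (Delta : nat -> R) (P : nat -> 'M[R]_(n, p))
  (ghat : nat -> 'cV[R]_p) (Hhat : nat -> 'M[R]_p) (shat : nat -> 'cV[R]_p)
  (kappaH flow LH M kappas alpha eps : R) (K : nat) :
  (* algorithm parameters *)
  (1 <= p)%N -> (p <= n)%N ->
  0 < Delta0 -> Delta0 <= Deltamax ->
  0 < gdec -> gdec < 1 -> 1 < ginc ->
  0 < eta -> eta < 1 -> 0 < mu ->
  0 < alpha -> alpha < 1 ->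
  (* iteration of the algorithm (any realization of the random P_k) *)
  x 0%N = x0 -> Delta 0%N = Delta0 ->
  (forall k, (Hhat k)^T = Hhat k) ->
  (exists kef keg keh : R, [/\ 0 < kef, 0 < keg, 0 < keh &
     forall k (s : 'cV[R]_p), enorm s <= Delta k ->
       [/\ `| f (x k + P k *m s) - qmodel (f (x k)) (ghat k) (Hhat k) s |
             <= kef * Delta k ^+ 3,
           enorm ((P k)^T *m grad f (x k + P k *m s) - (ghat k + Hhat k *m s))
             <= keg * Delta k ^+ 2 &
           opnorm ((P k)^T *m hess f (x k + P k *m s) *m P k - Hhat k)
             <= keh * Delta k]]) ->
  (forall k, enorm (shat k) <= Delta k) ->
  (forall k, successful f eta mu (x k) (P k) (ghat k) (Hhat k) (shat k) (Delta k) ->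
     x k.+1 = x k + P k *m shat k /\ Delta k.+1 = Num.min (ginc * Delta k) Deltamax) ->
  (forall k, ~~ successful f eta mu (x k) (P k) (ghat k) (Hhat k) (shat k) (Delta k) ->
     x k.+1 = x k /\ Delta k.+1 = gdec * Delta k) ->
  (* (i) *)
  1 <= kappaH -> (forall k, opnorm (Hhat k) <= kappaH) ->
  (* (ii) *)
  (forall y, flow <= f y) -> twice_cont_diff f -> hess_lipschitz f LH ->
  (forall k, opnorm (hess f (x k)) <= M) ->
  (* (iii) *)
  0 < kappas ->
  (forall k, qmodel (f (x k)) (ghat k) (Hhat k) 0 - qmodel (f (x k)) (ghat k) (Hhat k) (shat k)
     >= kappas * Num.max
          (enorm (ghat k) * Num.min (Delta k) (enorm (ghat k) / Num.max (opnorm (Hhat k)) 1))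
          (tau_m (Hhat k) * Delta k ^+ 2)) ->
  (* epsilon, theta *)
  0 < eps ->
  (forall k, (k <= K)%N ->
     0 < (1 - alpha) ^+ 2
         - 4 * M * ((\rank (hess f (x k)))%:R - 1) * alpha ^+ 2 / (eps * (1 - alpha) ^+ 2)) ->
  (forall k, (k <= K)%N -> eps <= crit f (x k)) ->
  let succ k := successful f eta mu (x k) (P k) (ghat k) (Hhat k) (shat k) (Delta k) in
  let c3 := ln ginc / ln (gdec^-1) in
  let c4 D := ln (Delta0 / D) / ln (gdec^-1) in
  (forall D, 0 < D -> D <= Delta0 ->
     (#|[set k : 'I_K.+1 | (gdec^-1 * D <= Delta k) && ~~ succ k]|)%:R
       <= c3 * (#|[set k : 'I_K.+1 | (ginc^-1 * D <= Delta k) && succ k]|)%:R + c4 D) /\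
  (forall D, 0 < D -> D <= Num.min Delta0 (ginc^-1 * Deltamax) ->
     (#|[set k : 'I_K.+1 | (Delta k < ginc^-1 * D) && succ k]|)%:R
       <= c3^-1 * (#|[set k : 'I_K.+1 | (Delta k < gdec^-1 * D) && ~~ succ k]|)%:R).
Proof.
move=> _ _ Delta0_gt0 Delta0_le gdec_gt0 gdec_lt1 ginc_gt1 _ _ _ _ _ _ Delta_0
  _ _ _ step_succ step_unsucc _ _ _ _ _ _ _ _ _ _ _ succ c3 c4.
have ginc_gt0 : 0 < ginc by exact: lt_trans ltr01 ginc_gt1.
have Delta_succ k : succ k -> Delta k.+1 = Num.min (ginc * Delta k) Deltamax.
  by move/step_succ => [].
have Delta_unsucc k : ~~ succ k -> Delta k.+1 = gdec * Delta k.
  by move/step_unsucc => [].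
split=> D D_gt0.
- move=> D_le; apply: count_le_of_ler_expr => //.
  have := max_radius_bound gdec_gt0 ginc_gt0 Delta_succ Delta_unsucc D K.+1.
  rewrite Delta_0 (max_idPl D_le); apply: le_trans.
  by rewrite le_max lexx orbT.
- rewrite le_min => /andP[D_le D_le_cap].
  have D_le_max : D <= Deltamax.
    apply: le_trans D_le_cap (ler_piMl _ _).
      exact: ltW (lt_le_trans Delta0_gt0 Delta0_le).
    by rewrite invf_le1 // ltW.
  apply: count_le_of_expr_le1 => //.
  have := min_radius_bound gdec_gt0 ginc_gt0 Delta_succ Delta_unsucc
    K.+1 D_le_max.
  rewrite Delta_0 (min_idPr D_le) -mulrA => bound.
  rewrite -(ler_pM2l D_gt0) mulr1 (le_trans bound) //.
  by rewrite ge_min lexx orbT.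
Qed.
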